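(* Let $I$ be an open interval and let $a_1,a_2,a_3\in I$ satisfy $\sin\big(\frac{a_1-a_3}{2}\big)\sin\big(\frac{a_2-a_1}{2}\big)\sin\big(\frac{a_3-a_2}{2}\big)\neq0$. Then for all $f\in\mathscr{C}^3(I)$ and $x\in I$, \[ \begin{aligned} f(x)&=\bigg(f(a_1)+\int_{a_1}^x(f'''+f')(t)\big(1-\cos(a_1-t)\big)dt\bigg)\frac{\cos\big(x-\frac{a_2+a_3}{2}\big)-\cos\big(\frac{a_2-a_3}{2}\big)}{\cos\big(a_1-\frac{a_2+a_3}{2}\big)-\cos\big(\frac{a_2-a_3}{2}\big)}\\ &\quad+\bigg(f(a_2)+\int_{a_2}^x(f'''+f')(t)\big(1-\cos(a_2-t)\big)dt\bigg)\frac{\cos\big(x-\frac{a_1+a_3}{2}\big)-\cos\big(\frac{a_1-a_3}{2}\big)}{\cos\big(a_2-\frac{a_1+a_3}{2}\big)-\cos\big(\frac{a_1-a_3}{2}\big)}\\ &\quad+\bigg(f(a_3)+\int_{a_3}^x(f'''+f')(t)\big(1-\cos(a_3-t)\big)dt\bigg)\frac{\cos\big(x-\frac{a_1+a_2}{2}\big)-\cos\big(\frac{a_1-a_2}{2}\big)}{\cos\big(a_3-\frac{a_1+a_2}{2}\big)-\cos\big(\frac{a_1-a_2}{2}\big)}. \end{aligned} \]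
   Context: $\mathscr{C}^3(I)$ denotes the space of three times continuously differentiable complex-valued functions on $I$. *)

From Stdlib Require Import Reals.
From Coquelicot Require Import Coquelicot.

Definition in_I (lo hi : Rbar) (x : R) : Prop := Rbar_lt lo x /\ Rbar_lt x hi.

Definition Cderiv_at (f : R -> C) (x : R) (l : C) : Prop :=
  @is_derive R_AbsRing C_R_NormedModule f x l.

Definition CRInt (g : R -> C) (a b : R) : C :=
  @RInt C_R_CompleteNormedModule g a b.

Definition C3_with (lo hi : Rbar) (f f1 f2 f3 : R -> C) : Prop :=
  forall x, in_I lo hi x ->
    Cderiv_at f x (f1 x) /\ Cderiv_at f1 x (f2 x) /\ Cderiv_at f2 x (f3 x) /\
    continuous f3 x.

From Stdlib Require Import Reals Lra.
From Coquelicot Require Import Coquelicot.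

(* The bracket attached to a node a is, by integrating the derivative of
   t |-> f t + f' t sin (a - t) + f'' t (1 - cos (a - t)), equal to
   P a, where P y := f x + f' x sin (y - x) + f'' x (1 - cos (y - x)) is a
   trigonometric polynomial of order one with P x = f x.  The three quotients
   are the Lagrange basis of span {1, cos, sin} at the nodes a1, a2, a3, so they
   reproduce P at x.  Interpolation becomes polynomial after the half-angle
   substitution: an element of span {1, cos, sin} is a quadratic form in
   (sin (y/2), cos (y/2)), and each basis function is a product of two linear
   forms sin ((y - aj)/2). *)

Lemma quadratic_form_lagrange (A B C p1 q1 p2 q2 p3 q3 p q : R) :
  p1 * q2 - q1 * p2 <> 0 -> p1 * q3 - q1 * p3 <> 0 -> p2 * q3 - q2 * p3 <> 0 ->
  let Q u v := A * u ^ 2 + B * u * v + C * v ^ 2 in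
  Q p1 q1 * ((p * q2 - q * p2) * (p * q3 - q * p3) / ((p1 * q2 - q1 * p2) * (p1 * q3 - q1 * p3)))
  + Q p2 q2 * ((p * q1 - q * p1) * (p * q3 - q * p3) / ((p2 * q1 - q2 * p1) * (p2 * q3 - q2 * p3)))
  + Q p3 q3 * ((p * q1 - q * p1) * (p * q2 - q * p2) / ((p3 * q1 - q3 * p1) * (p3 * q2 - q3 * p2)))
  = Q p q.
Proof.
  intros H12 H13 H23 Q; unfold Q.
  assert (p2 * q1 - q2 * p1 <> 0) by (intro; apply H12; lra).
  assert (p3 * q1 - q3 * p1 <> 0) by (intro; apply H13; lra).
  assert (p3 * q2 - q3 * p2 <> 0) by (intro; apply H23; lra).
  field; repeat split; assumption.
Qed.

Lemma sin_half_sub (u v : R) :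
  sin ((u - v) / 2) = sin (u / 2) * cos (v / 2) - cos (u / 2) * sin (v / 2).
Proof. replace ((u - v) / 2) with (u / 2 - v / 2) by field; apply sin_minus. Qed.

Lemma cos_sub_cos_half (y b c : R) :
  cos (y - (b + c) / 2) - cos ((b - c) / 2) = -2 * sin ((y - b) / 2) * sin ((y - c) / 2).
Proof.
  rewrite form2.
  replace ((y - (b + c) / 2 - (b - c) / 2) / 2) with ((y - b) / 2) by field.
  replace ((y - (b + c) / 2 + (b - c) / 2) / 2) with ((y - c) / 2) by field.
  reflexivity.
Qed.

Lemma trig_poly_half_angle (alpha beta gamma t : R) :
  alpha + beta * cos t + gamma * sin t =
  (alpha - beta) * sin (t / 2) ^ 2 + 2 * gamma * sin (t / 2) * cos (t / 2)
  + (alpha + beta) * cos (t / 2) ^ 2.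
Proof.
  pose proof (sin2_cos2 (t / 2)) as Hpyth; unfold Rsqr in Hpyth.
  replace t with (2 * (t / 2)) at 1 2 by field.
  rewrite cos_2a, sin_2a.
  replace alpha with (alpha * (sin (t / 2) * sin (t / 2) + cos (t / 2) * cos (t / 2))) at 1
    by (rewrite Hpyth; ring).
  ring.
Qed.

Definition trig_lagrange (a b c y : R) : R :=
  (cos (y - (b + c) / 2) - cos ((b - c) / 2)) / (cos (a - (b + c) / 2) - cos ((b - c) / 2)).

Lemma trig_lagrange_sin_prod (a b c y : R) :
  trig_lagrange a b c y =
  sin ((y - b) / 2) * sin ((y - c) / 2) / (sin ((a - b) / 2) * sin ((a - c) / 2)).
Proof.
  assert (Hcancel : forall k u v, k <> 0 -> k * u / (k * v) = u / v).
  { intros k u v Hk; unfold Rdiv; rewrite Rinv_mult; set (inv_v := / v); field; exact Hk. }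
  unfold trig_lagrange; rewrite !cos_sub_cos_half, !Rmult_assoc.
  apply Hcancel; lra.
Qed.

Lemma trig_lagrange_interpolation (a1 a2 a3 : R)
  (hsin : sin ((a1 - a3) / 2) * sin ((a2 - a1) / 2) * sin ((a3 - a2) / 2) <> 0)
  (alpha beta gamma y : R) (g : R -> R)
  (hg : forall t, g t = alpha + beta * cos t + gamma * sin t) :
  g a1 * trig_lagrange a1 a2 a3 y + g a2 * trig_lagrange a2 a1 a3 y
  + g a3 * trig_lagrange a3 a1 a2 y = g y.
Proof.
  rewrite !hg, !trig_poly_half_angle, !trig_lagrange_sin_prod, !sin_half_sub.
  apply Rmult_neq_0_reg in hsin as [hsin' h32]; apply Rmult_neq_0_reg in hsin' as [h13 h21].
  rewrite !sin_half_sub in h13, h21, h32.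
  apply quadratic_form_lagrange; intro E; [apply h21 | apply h13 | apply h32]; lra.
Qed.

Lemma trig_lagrange_interpolation_C (a1 a2 a3 : R)
  (hsin : sin ((a1 - a3) / 2) * sin ((a2 - a1) / 2) * sin ((a3 - a2) / 2) <> 0)
  (alpha beta gamma : C) (y : R) (g : R -> C)
  (hg : forall t, g t = (alpha + beta * RtoC (cos t) + gamma * RtoC (sin t))%C) :
  (g a1 * RtoC (trig_lagrange a1 a2 a3 y) + g a2 * RtoC (trig_lagrange a2 a1 a3 y)
   + g a3 * RtoC (trig_lagrange a3 a1 a2 y))%C = g y.
Proof.
  assert (Hone := trig_lagrange_interpolation a1 a2 a3 hsin 1 0 0 y (fun _ => 1)).
  assert (Hcos := trig_lagrange_interpolation a1 a2 a3 hsin 0 1 0 y cos).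
  assert (Hsin := trig_lagrange_interpolation a1 a2 a3 hsin 0 0 1 y sin).
  rewrite !Rmult_1_l in Hone.
  set (L1 := trig_lagrange a1 a2 a3 y) in *.
  set (L2 := trig_lagrange a2 a1 a3 y) in *.
  set (L3 := trig_lagrange a3 a1 a2 y) in *.
  specialize (Hone (fun _ => ltac:(ring))); specialize (Hcos (fun _ => ltac:(ring)));
    specialize (Hsin (fun _ => ltac:(ring))).
  rewrite !hg; transitivity (alpha * RtoC (L1 + L2 + L3)
    + beta * RtoC (cos a1 * L1 + cos a2 * L2 + cos a3 * L3)
    + gamma * RtoC (sin a1 * L1 + sin a2 * L2 + sin a3 * L3))%C.
  - rewrite !RtoC_plus, !RtoC_mult; ring.
  - rewrite Hone, Hcos, Hsin; ring.
Qed.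

Lemma in_I_between (lo hi : Rbar) (a x t : R) :
  in_I lo hi a -> in_I lo hi x -> Rmin a x <= t <= Rmax a x -> in_I lo hi t.
Proof.
  intros [Hlo_a Ha_hi] [Hlo_x Hx_hi] [Hmin Hmax]; split.
  - apply Rbar_lt_le_trans with (Rmin a x); [apply Rmin_case; assumption | exact Hmin].
  - apply Rbar_le_lt_trans with (Rmax a x); [exact Hmax | apply Rmax_case; assumption].
Qed.

Lemma Cderiv_at_Cmult_real (h : R -> C) (g : R -> R) (t : R) (dh : C) (dg : R) :
  Cderiv_at h t dh -> is_derive g t dg ->
  Cderiv_at (fun u => h u * RtoC (g u))%C t (dh * RtoC (g t) + h t * RtoC dg)%C.
Proof.
  unfold Cderiv_at; intros Hh Hg.
  apply (@is_derive_ext R_AbsRing C_R_NormedModule (fun u => scal (g u) (h u))).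
  { intros u; rewrite scal_R_Cmult; apply Cmult_comm. }
  eapply filterdiff_ext_lin.
  - apply (filterdiff_scal_fct t g h); [intros; apply Rmult_comm | exact Hg | exact Hh].
  - intros y; simpl; rewrite !scal_R_Cmult.
    change (scal y dg) with (y * dg).
    rewrite RtoC_mult.
    change (y * dg * h t + g t * (y * dh) = y * (dh * g t + h t * dg))%C; ring.
Qed.

Lemma continuous_Cmult_real (h : R -> C) (g : R -> R) (t : R) :
  continuous h t -> continuous g t -> continuous (fun u => h u * RtoC (g u))%C t.
Proof.
  intros Hh Hg.
  apply (continuous_ext (fun u => @scal R_AbsRing C_R_NormedModule (g u) (h u))).
  { intros u; rewrite scal_R_Cmult; apply Cmult_comm. }
  exact (@continuous_scal _ R_AbsRing C_R_NormedModule _ _ _ Hg Hh).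
Qed.

Lemma Cderiv_at_trig_taylor (f f1 f2 f3 : R -> C) (a t : R) :
  Cderiv_at f t (f1 t) -> Cderiv_at f1 t (f2 t) -> Cderiv_at f2 t (f3 t) ->
  Cderiv_at (fun u => f u + f1 u * RtoC (sin (a - u)) + f2 u * RtoC (1 - cos (a - u)))%C t
    ((f3 t + f1 t) * RtoC (1 - cos (a - t)))%C.
Proof.
  intros D0 D1 D2.
  assert (Dsin : is_derive (fun u => sin (a - u)) t (- cos (a - t))).
  { auto_derive; [exact I | unfold Rminus; ring]. }
  assert (Dcos : is_derive (fun u => 1 - cos (a - u)) t (- sin (a - t))).
  { auto_derive; [exact I | unfold Rminus; ring]. }
  replace ((f3 t + f1 t) * RtoC (1 - cos (a - t)))%C with
    (plus (plus (f1 t) (f2 t * RtoC (sin (a - t)) + f1 t * RtoC (- cos (a - t))))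
          (f3 t * RtoC (1 - cos (a - t)) + f2 t * RtoC (- sin (a - t))))%C.
  - apply (@is_derive_plus R_AbsRing C_R_NormedModule);
      [apply (@is_derive_plus R_AbsRing C_R_NormedModule); [exact D0 |] |].
    + exact (Cderiv_at_Cmult_real f1 (fun u => sin (a - u)) t _ _ D1 Dsin).
    + exact (Cderiv_at_Cmult_real f2 (fun u => 1 - cos (a - u)) t _ _ D2 Dcos).
  - change (f1 t + (f2 t * RtoC (sin (a - t)) + f1 t * RtoC (- cos (a - t)))
            + (f3 t * RtoC (1 - cos (a - t)) + f2 t * RtoC (- sin (a - t)))
            = (f3 t + f1 t) * RtoC (1 - cos (a - t)))%C.
    rewrite !RtoC_opp, RtoC_minus; ring.
Qed.

Lemma trig_taylor_integral (lo hi : Rbar) (f f1 f2 f3 : R -> C) (a x : R) :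
  C3_with lo hi f f1 f2 f3 -> in_I lo hi a -> in_I lo hi x ->
  (f a + CRInt (fun t => (f3 t + f1 t) * RtoC (1 - cos (a - t))) a x)%C =
  (f x + f1 x * RtoC (sin (a - x)) + f2 x * RtoC (1 - cos (a - x)))%C.
Proof.
  intros hf ha hx.
  set (G := (fun u => f u + f1 u * RtoC (sin (a - u)) + f2 u * RtoC (1 - cos (a - u)))%C).
  assert (HI : CRInt (fun t => (f3 t + f1 t) * RtoC (1 - cos (a - t)))%C a x
               = minus (G x) (G a)).
  { apply (@is_RInt_unique C_R_CompleteNormedModule), (@is_RInt_derive C_R_CompleteNormedModule);
      intros t Ht; destruct (hf t (in_I_between lo hi a x t ha hx Ht)) as [D0 [D1 [D2 C3]]].
    - exact (Cderiv_at_trig_taylor f f1 f2 f3 a t D0 D1 D2).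
    - apply continuous_Cmult_real.
      + apply (@continuous_plus _ R_AbsRing C_R_NormedModule); [exact C3 |].
        apply ex_derive_continuous; exists (f2 t); exact D1.
      + apply (ex_derive_continuous (fun u => 1 - cos (a - u))); auto_derive; exact I. }
  rewrite HI; unfold G; rewrite Rminus_diag, sin_0, cos_0.
  change (f a + (f x + f1 x * RtoC (sin (a - x)) + f2 x * RtoC (1 - cos (a - x))
              - (f a + f1 a * RtoC 0 + f2 a * RtoC (1 - 1)))
          = f x + f1 x * RtoC (sin (a - x)) + f2 x * RtoC (1 - cos (a - x)))%C.
  rewrite Rminus_diag; ring.
Qed.

Theorem mainTheorem12 (lo hi : Rbar) (a1 a2 a3 : R)
  (h1 : in_I lo hi a1) (h2 : in_I lo hi a2) (h3 : in_I lo hi a3)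
  (hsin : (sin ((a1 - a3) / 2) * sin ((a2 - a1) / 2) * sin ((a3 - a2) / 2) <> 0)%R)
  (f f1 f2 f3 : R -> C) (hf : C3_with lo hi f f1 f2 f3)
  (x : R) (hx : in_I lo hi x) :
  f x =
  ((f a1 + CRInt (fun t => (f3 t + f1 t) * RtoC (1 - cos (a1 - t))) a1 x)
     * RtoC ((cos (x - (a2 + a3) / 2) - cos ((a2 - a3) / 2))
             / (cos (a1 - (a2 + a3) / 2) - cos ((a2 - a3) / 2)))
 + (f a2 + CRInt (fun t => (f3 t + f1 t) * RtoC (1 - cos (a2 - t))) a2 x)
     * RtoC ((cos (x - (a1 + a3) / 2) - cos ((a1 - a3) / 2))
             / (cos (a2 - (a1 + a3) / 2) - cos ((a1 - a3) / 2)))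
 + (f a3 + CRInt (fun t => (f3 t + f1 t) * RtoC (1 - cos (a3 - t))) a3 x)
     * RtoC ((cos (x - (a1 + a2) / 2) - cos ((a1 - a2) / 2))
             / (cos (a3 - (a1 + a2) / 2) - cos ((a1 - a2) / 2))))%C.
Proof.
  rewrite (trig_taylor_integral lo hi f f1 f2 f3 a1 x hf h1 hx),
    (trig_taylor_integral lo hi f f1 f2 f3 a2 x hf h2 hx),
    (trig_taylor_integral lo hi f f1 f2 f3 a3 x hf h3 hx).
  set (g := fun t => (f x + f1 x * RtoC (sin (t - x)) + f2 x * RtoC (1 - cos (t - x)))%C).
  transitivity (g x).
  - unfold g; rewrite Rminus_diag, sin_0, cos_0, Rminus_diag; ring.
  - symmetry.
    apply (trig_lagrange_interpolation_C a1 a2 a3 hsin (f x + f2 x)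
             (- (f1 x * RtoC (sin x)) - f2 x * RtoC (cos x))
             (f1 x * RtoC (cos x) - f2 x * RtoC (sin x)) x g).
    intros t; unfold g; rewrite sin_minus, cos_minus, RtoC_minus, RtoC_minus, RtoC_plus,
      !RtoC_mult; ring.
Qed.
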